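(* Let $(M,\Gamma,\le)$ be a $po$-$\Gamma$-groupoid and let $f$ be a fuzzy subset of $M$. Then $f$ is a fuzzy left ideal of $M$ if and only if (1) $1\circ f\preceq f$ and (2) for all $x,y\in M$, if $x\le y$ then $f(x)\ge f(y)$.
   Context: Let $M$ and $\Gamma$ be nonempty sets with a map $M\times\Gamma\times M\to M$, $(a,\gamma,b)\mapsto a\gamma b$. A $po$-$\Gamma$-groupoid is such an $M$ with a partial order $\le$ on $M$ such that $a\le b$ implies $a\gamma c\le b\gamma c$ and $c\gamma a\le c\gamma b$ for all $c\in M$, $\gamma\in\Gamma$. A fuzzy subset of $M$ is a map $M\to[0,1]$. For $a\in M$ let $A_a=\{(y,z)\in M\times M : a\le y\gamma z \text{ for some } \gamma\in\Gamma\}$. For fuzzy subsets $f,g$, define $(f\circ g)(a)=\bigvee_{(y,z)\in A_a}\min\{f(y),g(z)\}$ if $A_a\neq\emptyset$ and $(f\circ g)(a)=0$ if $A_a=\emptyset$. $f\preceq g$ means $f(a)\le g(a)$ for all $a\in M$. $1$ denotes the fuzzy subset with $1(x)=1$ for all $x\in M$. A fuzzy left ideal of $M$ is a fuzzy subset $f$ with $f(x\gamma y)\ge f(y)$ for all $x,y\in M$, $\gamma\in\Gamma$, and such that $x\le y$ implies $f(x)\ge f(y)$. *)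

From HB Require Import structures.
From mathcomp Require Import all_boot all_order all_algebra.
From mathcomp Require Import all_classical all_reals.
Set Implicit Arguments. Unset Strict Implicit. Unset Printing Implicit Defensive.
Import Order.TTheory GRing.Theory Num.Theory.
Local Open Scope classical_set_scope.
Local Open Scope ring_scope.

Section Defs.
Variables (M Gamma : Type) (op : M -> Gamma -> M -> M) (le : M -> M -> Prop).

Definition po_gamma_groupoid : Prop :=
  [/\ (forall a, le a a),
      (forall a b, le a b -> le b a -> a = b),
      (forall a b c, le a b -> le b c -> le a c) &
      (forall a b c g, le a b -> le (op a g c) (op b g c) /\ le (op c g a) (op c g b))].

Variable R : realType.

Definition fuzzy_subset (f : M -> R) : Prop := forall x, 0 <= f x <= 1.

Definition A_set (a : M) : set (M * M) :=
  [set yz | exists g : Gamma, le a (op yz.1 g yz.2)].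

Definition fuzzy_comp (f g : M -> R) (a : M) : R :=
  if `[< A_set a !=set0 >]
  then sup [set Num.min (f yz.1) (g yz.2) | yz in A_set a]
  else 0.

Definition fuzzy_preceq (f g : M -> R) : Prop := forall a, f a <= g a.

Definition fuzzy_one : M -> R := fun _ => 1.

Definition fuzzy_left_ideal (f : M -> R) : Prop :=
  (forall x y g, f y <= f (op x g y)) /\ (forall x y, le x y -> f y <= f x).
End Defs.

From mathcomp Require Import all_boot all_order all_algebra.
From mathcomp Require Import all_classical all_reals.
Import Order.TTheory GRing.Theory Num.Theory.
Local Open Scope ring_scope.

(* Every pair in A_a witnesses a <= y gamma z, so for a fuzzy left ideal
   min(1, f z) <= f z <= f (y gamma z) <= f a, and the supremum defining
   (1 o f)(a) is bounded by f a.  Conversely (x, y) lies in A_(x gamma y) by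
   reflexivity, and min(1, f y) = f y because f takes values in [0,1], so
   f y <= (1 o f)(x gamma y) <= f (x gamma y). *)

Section FuzzyCompOne.
Context {R : realType} {M Gamma : Type}.
Context {op : M -> Gamma -> M -> M} {le : M -> M -> Prop} {f : M -> R}.

Let one_f := fuzzy_comp op le (@fuzzy_one M R) f.

Lemma fuzzy_comp_one_le (a : M) :
  (forall x y g, f y <= f (op x g y)) -> (forall x y, le x y -> f y <= f x) ->
  0 <= f a -> one_f a <= f a.
Proof.
move=> f_op f_anti f_ge0; rewrite /one_f /fuzzy_comp.
case: ifPn => [/asboolP [[y0 z0] A_yz0] | _] //.
apply: ge_sup; first by exists (Num.min 1 (f z0)), (y0, z0).
move=> _ [[y z] [g /= a_le] <-]; rewrite /fuzzy_one /=.
by rewrite ge_min (le_trans (f_op y z g) (f_anti _ _ a_le)) orbT.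
Qed.

Lemma le_fuzzy_comp_one (x y : M) (g : Gamma) :
  (forall a, le a a) -> fuzzy_subset f -> f y <= one_f (op x g y).
Proof.
move=> le_refl f01.
have A_xy : A_set op le (op x g y) (x, y) by exists g; apply: le_refl.
rewrite /one_f /fuzzy_comp; case: ifPn => [_ | /asboolP []]; last by exists (x, y).
have -> : f y = Num.min (@fuzzy_one M R x) (f y).
  by rewrite /fuzzy_one min_r //; case/andP: (f01 y).
apply: ub_le_sup; last by exists (x, y).
by exists 1 => _ [[a b] _ <-]; rewrite /fuzzy_one ge_min lexx.
Qed.

End FuzzyCompOne.

Theorem proposition5 (R : realType) (M Gamma : Type)
    (op : M -> Gamma -> M -> M) (le : M -> M -> Prop) (f : M -> R) :
  inhabited M -> inhabited Gamma ->
  po_gamma_groupoid op le ->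
  fuzzy_subset f ->
  (fuzzy_left_ideal op le f <->
   (fuzzy_preceq (fuzzy_comp op le (@fuzzy_one M R) f) f /\
    (forall x y, le x y -> f y <= f x))).
Proof.
move=> _ _ [le_refl _ _ _] f01; split.
- move=> [f_op f_anti]; split=> // a.
  by apply: fuzzy_comp_one_le => //; case/andP: (f01 a).
- move=> [one_f_le f_anti]; split=> // x y g.
  exact: le_trans (le_fuzzy_comp_one (op:=op) x y g le_refl f01) (one_f_le _).
Qed.
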